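(* Let $G$ be a chordal graph with evaporation sequence $L_1,\dots,L_t$ with exception set $X$ (a clique), where $t\ge 2$, and suppose $X\cup L_t$ is a clique. For each connected component $C$ of $G[L_{t-1}]$ let $\hat N(C):=N_G(C)\cap(X\cup L_t)$. Then one of the following holds: (1) there is at most one connected component $C$ of $G[L_{t-1}]$ with $\hat N(C)=X\cup L_t$, and $L_t\subseteq\bigcup\{\hat N(C): C \text{ a component of } G[L_{t-1}],\ \hat N(C)\ne X\cup L_t\}$; (2) there are at least two distinct connected components $C_1,C_2$ of $G[L_{t-1}]$ with $\hat N(C_1)=\hat N(C_2)=X\cup L_t$.
   Context: A vertex is simplicial if its neighborhood is a clique. For a chordal graph $G$ and a clique $X\subseteq V(G)$ (possibly empty), the evaporation sequence of $G$ with exception set $X$ is defined recursively: if $X=V(G)$ it is the empty sequence; otherwise let $L_1$ be the set of simplicial vertices of $G$ that are not in $X$ (this set is always nonempty), and the evaporation sequence is $L_1$ followed by the evaporation sequence of $G-L_1$ with exception set $X$. For $S\subseteq V(G)$, $N_G(S)$ is the set of vertices not in $S$ adjacent to some vertex of $S$. *)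

From mathcomp Require Import all_boot.
Set Implicit Arguments. Unset Strict Implicit. Unset Printing Implicit Defensive.

Section Graphs.
Variables (T : finType) (g : rel T).

Definition simple_graph : Prop := symmetric g /\ irreflexive g.

Definition is_clique (S : {set T}) : bool :=
  [forall x in S, forall y in S, (x != y) ==> g x y].

Definition simplicial (V : {set T}) (v : T) : bool :=
  (v \in V) && is_clique [set u in V | g v u].

(* chordal: every cycle of length >= 4 (uniq vertex sequence, consecutive
   vertices adjacent, cyclically) has a chord *)
Definition chordal : Prop :=
  forall s : seq T, uniq s -> 4 <= size s -> cycle g s ->
    exists x y, [/\ x \in s, y \in s, x != y, g x y &
                   (y != next s x) && (x != next s y)].

Definition evap_layer (X V : {set T}) : {set T} :=
  [set v in V | simplicial V v && (v \notin X)].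

Inductive evap_seq (X : {set T}) : {set T} -> seq {set T} -> Prop :=
| evap_nil : evap_seq X X [::]
| evap_cons V Ls : V != X -> evap_seq X (V :\: evap_layer X V) Ls ->
    evap_seq X V (evap_layer X V :: Ls).

Definition induced (S : {set T}) : rel T :=
  [rel a b | [&& g a b, a \in S & b \in S]].

Definition components (S : {set T}) : {set {set T}} :=
  [set [set y in S | connect (induced S) x y] | x in S].

Definition nbhd (C : {set T}) : {set T} :=
  [set v | (v \notin C) && [exists u in C, g u v]].

End Graphs.

From mathcomp Require Import all_boot.
Set Implicit Arguments. Unset Strict Implicit. Unset Printing Implicit Defensive.

(* Let V be the vertex set remaining before the last two layers, so that
   L_{t-1} is the set of simplicial vertices of G[V] outside X and
   V \ L_{t-1} = X u L_t.  Adjacent simplicial vertices have the same closed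
   neighbourhood, so the closed neighbourhood in G[V] is constant on each
   component C of G[L_{t-1}].  If some v in L_t lies in no non-full N^(C),
   every component meeting N(v) is full; with at most one full component,
   all neighbours of v in L_{t-1} then lie in one full component C, and
   every neighbour of v in V is in the closed neighbourhood of every vertex
   of C.  Together with X u L_t being a clique this makes v simplicial in
   G[V], so v would already belong to L_{t-1}. *)

Section Evaporation.
Variables (T : finType) (g : rel T).

Lemma evap_layer_sub (X V : {set T}) : evap_layer g X V \subset V.
Proof. by apply/subsetP=> v; rewrite inE => /andP[]. Qed.

Lemma evap_layer_next_not_simplicial (X V : {set T}) v :
  v \in evap_layer g X (V :\: evap_layer g X V) -> ~~ simplicial g V v.
Proof.
rewrite !inE => /and3P[/andP[vL1 vV] _ vX].
by apply: contra vL1 => sv; rewrite vV sv vX.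
Qed.

Lemma evap_seq_consE (X V L : {set T}) Ls :
  evap_seq g X V (L :: Ls) -> L = evap_layer g X V /\ evap_seq g X (V :\: L) Ls.
Proof. by move=> h; inversion h. Qed.

Lemma evap_seq_nilE (X V : {set T}) : evap_seq g X V [::] -> V = X.
Proof. by move=> h; inversion h. Qed.

Lemma evap_seq_last_two (X : {set T}) Ls :
  forall V0, evap_seq g X V0 Ls -> 2 <= size Ls ->
  exists V, let L1 := evap_layer g X V in let L2 := evap_layer g X (V :\: L1) in
  [/\ nth set0 Ls (size Ls).-2 = L1, nth set0 Ls (size Ls).-1 = L2
    & V :\: L1 = X :|: L2].
Proof.
elim: Ls => [|L Ls IH] V0 hev //; case: Ls IH hev => [|L' Ls] IH hev // _.
have [-> {hev} hev'] := evap_seq_consE hev.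
case: Ls IH hev' => [_|L'' Ls IH] hev'; last exact: IH hev' _.
exists V0; move: hev'; set L1 := evap_layer g X V0.
move=> /evap_seq_consE[-> /evap_seq_nilE Hev]; split=> //.
move: (evap_layer_sub X (V0 :\: L1)) Hev.
move: (evap_layer g X (V0 :\: L1)) => L2; move: (V0 :\: L1) => W sub HW.
apply/setP=> v; rewrite -HW !inE.
by case: (boolP (v \in L2)) => [vL2|_]; rewrite ?(subsetP sub v vL2) ?orbF.
Qed.

End Evaporation.

Section InducedSubgraphs.
Variables (T : finType) (g : rel T).

Lemma cliqueP (S : {set T}) x y :
  is_clique g S -> x \in S -> y \in S -> x != y -> g x y.
Proof.
move=> /forall_inP/(_ x) cS xS yS.
by move/forall_inP/(_ y yS)/implyP: (cS xS); apply.
Qed.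

Lemma cliqueI (S : {set T}) :
  (forall x y, x \in S -> y \in S -> x != y -> g x y) -> is_clique g S.
Proof.
move=> cS; apply/forall_inP=> x xS; apply/forall_inP=> y yS.
by apply/implyP; apply: cS.
Qed.

Definition component (S : {set T}) (x : T) : {set T} :=
  [set y in S | connect (induced g S) x y].

Lemma component_mem (S : {set T}) x : x \in S -> x \in component S x.
Proof. by move=> xS; rewrite inE xS connect0. Qed.

Lemma component_in_components (S : {set T}) x :
  x \in S -> component S x \in components g S.
Proof. by move=> xS; apply/imsetP; exists x. Qed.

Lemma component_connect (S : {set T}) x y :
  y \in component S x -> connect (induced g S) x y.
Proof. by rewrite inE => /andP[]. Qed.

Lemma mem_nbhd_component (S : {set T}) x v :
  x \in S -> v \notin S -> g x v -> v \in nbhd g (component S x).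
Proof.
move=> xS vS gxv; rewrite inE inE (negbTE vS) /=.
by apply/exists_inP; exists x; rewrite ?component_mem.
Qed.

End InducedSubgraphs.

Section ClosedNeighbourhood.
Variables (T : finType) (g : rel T).
Hypothesis gsym : symmetric g.

Definition closed_nbhd (V : {set T}) (x : T) : {set T} :=
  [set w in V | (w == x) || g x w].

Lemma simplicial_closed_nbhd_sub (V : {set T}) x y :
  simplicial g V x -> simplicial g V y -> g x y ->
  closed_nbhd V x \subset closed_nbhd V y.
Proof.
move=> /andP[xV cx] /andP[yV cy] gxy; apply/subsetP=> z; rewrite !inE.
case/andP=> zV /orP[/eqP->|gxz]; first by rewrite xV gsym gxy orbT.
rewrite zV /=; have [->|nzy] := eqVneq z y; first by [].
by apply: (cliqueP cx); rewrite ?inE ?yV ?zV ?gxy ?gxz // eq_sym.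
Qed.

Lemma simplicial_closed_nbhd_eq (V : {set T}) x y :
  simplicial g V x -> simplicial g V y -> g x y ->
  closed_nbhd V x = closed_nbhd V y.
Proof.
move=> sx sy gxy; apply/eqP; rewrite eqEsubset !simplicial_closed_nbhd_sub //.
by rewrite gsym.
Qed.

Variables (V S : {set T}).
Hypothesis S_simplicial : forall u, u \in S -> simplicial g V u.

Lemma connect_closed_nbhd_eq x y :
  connect (induced g S) x y -> closed_nbhd V x = closed_nbhd V y.
Proof.
move=> cxy.
have cl : closed (induced g S) [pred z | closed_nbhd V z == closed_nbhd V x].
  move=> a b /and3P[gab aS bS]; rewrite !inE /=.
  by rewrite (simplicial_closed_nbhd_eq (S_simplicial aS) (S_simplicial bS) gab).
by have := closed_connect cl cxy; rewrite !inE /= eqxx => /esym/eqP.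
Qed.

Lemma connect_adj_closed_nbhd x u y :
  y \in V -> x != y -> connect (induced g S) x u -> y \in closed_nbhd V u -> g x y.
Proof.
move=> yV nxy cxu; rewrite -(connect_closed_nbhd_eq cxu) inE yV /=.
by case/orP=> // /eqP yx; rewrite yx eqxx in nxy.
Qed.

Lemma simplicial_of_full_component v :
  v \in V -> is_clique g (V :\: S) ->
  (forall x y, x \in S -> y \in S -> g v x -> g v y -> component g S x = component g S y) ->
  (forall x, x \in S -> g v x -> V :\: S \subset nbhd g (component g S x)) ->
  simplicial g V v.
Proof.
move=> vV cVS same_comp full_comp.
have adj x y : x \in S -> y \in V -> g v x -> g v y -> x != y -> g x y.
  move=> xS yV gvx gvy nxy; have [yS|yS] := boolP (y \in S).
    apply: (connect_adj_closed_nbhd yV nxy (u := y)); last by rewrite inE yV eqxx.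
    by apply: component_connect; rewrite (same_comp x y) // component_mem.
  have : y \in nbhd g (component g S x).
    by apply: (subsetP (full_comp x xS gvx)); rewrite inE yS yV.
  rewrite inE => /andP[_ /exists_inP[u xu guy]].
  apply: (connect_adj_closed_nbhd yV nxy (component_connect xu)).
  by rewrite inE yV guy orbT.
rewrite /simplicial vV; apply: cliqueI => x y; rewrite !inE.
move=> /andP[xV gvx] /andP[yV gvy] nxy.
have [xS|xS] := boolP (x \in S); first exact: adj.
have [yS|yS] := boolP (y \in S); first by rewrite gsym adj // eq_sym.
by apply: (cliqueP cVS); rewrite // inE ?xS ?yS ?xV ?yV.
Qed.

End ClosedNeighbourhood.

Theorem lemma5p15 (T : finType) (g : rel T) (X : {set T}) (Ls : seq {set T}) :
  simple_graph g -> chordal g -> is_clique g X ->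
  evap_seq g X [set: T] Ls -> 2 <= size Ls ->
  let Lt := nth set0 Ls (size Ls).-1 in
  let Lt1 := nth set0 Ls (size Ls).-2 in
  let Y := X :|: Lt in
  let Nhat := fun C : {set T} => nbhd g C :&: Y in
  is_clique g Y ->
  ((#|[set C in components g Lt1 | Nhat C == Y]| <= 1 /\
    Lt \subset \bigcup_(C in components g Lt1 | Nhat C != Y) Nhat C)
   \/
   (exists C1 C2, [/\ C1 \in components g Lt1, C2 \in components g Lt1,
                     C1 != C2, Nhat C1 = Y & Nhat C2 = Y])).
Proof.
move=> [gsym _] _ _ hev hs Lt Lt1 Y Nhat cY.
have [V [eLt1 eLt eY]] := evap_seq_last_two hev hs.
rewrite -/Lt1 -/Lt in eLt1 eLt; rewrite -eLt1 in eLt eY; rewrite -eLt -/Y in eY.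
set F := [set C in components g Lt1 | Nhat C == Y].
have [leF1|/card_gt1P[C1 [C2 [C1F C2F neC]]]] := leqP #|F| 1; last first.
  by right; move: C1F C2F; rewrite !inE => /andP[? /eqP ?] /andP[? /eqP ?]; exists C1, C2.
left; split=> //; apply/subsetP=> v vLt; apply/negPn/negP => v_uncovered.
have [vV vLt1] : v \in V /\ v \notin Lt1.
  by move: vLt; rewrite eLt => /(subsetP (evap_layer_sub _ _ _)); rewrite inE => /andP[].
have full x : x \in Lt1 -> g v x -> Nhat (component g Lt1 x) = Y.
  move=> xLt1 gvx; apply/eqP; apply: contraNT v_uncovered => nfull.
  apply: (subsetP (bigcup_sup (component g Lt1 x) _)).
    by rewrite component_in_components.
  by rewrite inE mem_nbhd_component // 1?gsym // inE vLt orbT.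
move: vLt; rewrite eLt {1}eLt1 => /evap_layer_next_not_simplicial/negP[].
apply: (@simplicial_of_full_component _ _ gsym V Lt1); rewrite ?eY //.
- by move=> u; rewrite eLt1 inE => /and3P[].
- move=> x y xLt1 yLt1 gvx gvy; apply/esym/(card_le1_eqP leF1);
  by rewrite inE component_in_components // full // eqxx.
- by move=> x xLt1 gvx; apply/setIidPr; exact: full.
Qed.
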